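(* Let $n\geqslant2$ and $r_1, \ldots , r_n$ be positive integers with $r_1<r_2<\cdots<r_n$. Then $$\varphi\big(C(r_1, \ldots, r_n)\big)=\varphi^{r_n-r_{n-1}}\big(C(r_1, \ldots, r_{n-1})\big)\varphi\big(C(r_1, \ldots, r_{n-2})\big)\frac{x^2-r_n}{x^2-r_{n-1}}.$$
   Context: For a graph $G$, $\varphi(G;x)$ (abbreviated $\varphi(G)$) denotes the characteristic polynomial of its adjacency matrix. For rooted trees $T_1,T_2$ with disjoint vertex sets and a positive integer $n$, $T_1\sim nT_2$ denotes the rooted tree obtained from $T_1$ and $n$ copies of $T_2$ by joining the root of $T_1$ to the roots of the copies of $T_2$; the root of $T_1$ is the root of the result. For positive integers $r_1<\cdots<r_n$, the rooted tree $C(r_1,\ldots,r_n)$ is defined recursively by $C(r_1,\ldots,r_n)=C(r_1,\ldots,r_{n-2})\sim (r_n-r_{n-1})C(r_1,\ldots,r_{n-1})$ for $n\geqslant2$, where $C(\,)$ is the one-vertex tree and $C(r_1)$ is the star on $r_1+1$ vertices rooted at its center. *)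

From mathcomp Require Import all_boot all_algebra.
Set Implicit Arguments. Unset Strict Implicit. Unset Printing Implicit Defensive.
Import GRing.Theory.
Local Open Scope ring_scope.

Inductive tree := Node of seq tree.

Definition leaf : tree := Node [::].

Fixpoint tree_size (t : tree) : nat :=
  let: Node ts := t in (sumn (map tree_size ts)).+1.

(* Vertices of t are numbered 0 .. tree_size t - 1 in preorder: the root is 0,
   and the k-th child subtree occupies a contiguous block starting right after
   the blocks of the previous children.  adj t i j : i and j are adjacent. *)
Fixpoint adj (t : tree) (i j : nat) {struct t} : bool :=
  let: Node ts := t in
  (fix go (l : seq tree) (o : nat) : bool :=
     match l with
     | [::] => false
     | c :: l' =>
       [|| (i == 0)%N && (j == o), (j == 0)%N && (i == o),
           [&& (o <= i)%N, (o <= j)%N, (i < o + tree_size c)%N,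
               (j < o + tree_size c)%N & adj c (i - o)%N (j - o)%N]
         | go l' (o + tree_size c)%N]
     end) ts 1%N.

Definition adjmx (t : tree) : 'M[int]_(tree_size t) :=
  \matrix_(i, j) (adj t i j)%:R.

Definition phi (t : tree) : {poly int} := char_poly (adjmx t).

(* T1 ~ k T2 : join the root of T1 to the roots of k copies of T2. *)
Definition tjoin (t1 : tree) (k : nat) (t2 : tree) : tree :=
  let: Node ts := t1 in Node (ts ++ nseq k t2).

(* Crev [:: r_m; r_(m-1); ...; r_1] = C(r_1, ..., r_m). *)
Fixpoint Crev (l : seq nat) : tree :=
  match l with
  | [::] => leaf
  | [:: r] => tjoin leaf r leaf
  | a :: ((b :: t) as l') => tjoin (Crev t) (a - b)%N (Crev l')
  end.

Definition C (s : seq nat) : tree := Crev (rev s).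

From mathcomp Require Import all_boot all_algebra.
From mathcomp Require Import perm zify ring.
Import GRing.Theory.
Local Open Scope ring_scope.
Set Implicit Arguments. Unset Strict Implicit. Unset Printing Implicit Defensive.

(* Schwenk's formula phi(T) = phi(T1) phi(T2) - phi(T1 - v1) phi(T2 - v2), for T
   obtained by joining the roots v1, v2 of T1, T2 by an edge, gives for T = T1 ~ k T2
     phi(T)      = phi(T1) phi(T2)^k - k phi'(T1) phi'(T2) phi(T2)^(k-1),
     phi'(T)     = phi'(T1) phi(T2)^k,
   where phi' is the characteristic polynomial with the root deleted.  Writing
   A_k, B_k for phi, phi' of C(r_1, ..., r_k), the identity
     A_k A_(k-1) = B_k B_(k-1) (x^2 - r_k)
   turns the formula for A_k into the theorem, and the theorem at k in turn gives
   the identity at k after cancelling x^2 - r_(k-1); so both follow by induction. *)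

(* Case analysis on the four blocks of a matrix entry; off-diagonal entries
   vanishing because an index is nonzero are closed along the way. *)
Ltac block_entries :=
  let i := fresh "i" in let j := fresh "j" in
  move=> i j; rewrite -(splitK i) -(splitK j);
  case: (split i) => {i} i; case: (split j) => {j} j /=;
  rewrite ?block_mxEul ?block_mxEur ?block_mxEdl ?block_mxEdr ?mxE
    ?eq_lshift ?eq_rshift ?eq_lrshift ?eq_rlshift;
  try done; do ?[move=> /negPf -> | move=> _]; rewrite /= ?mulr0n ?oppr0 ?eqxx.

Section DetJoin.
Variable R : comNzRingType.

Lemma det_rowD n (A B C : 'M[R]_n) i0 :
  (forall j, A i0 j = B i0 j + C i0 j) ->
  (forall i j, i != i0 -> B i j = A i j) ->
  (forall i j, i != i0 -> C i j = A i j) -> \det A = \det B + \det C.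
Proof.
move=> rowA rowB rowC; rewrite -[\det B]mul1r -[\det C]mul1r.
apply: (determinant_multilinear (i0 := i0)); apply/matrixP=> i j; rewrite !mxE.
- by rewrite !mul1r rowA.
- by rewrite rowB // eq_sym neq_lift.
- by rewrite rowC // eq_sym neq_lift.
Qed.

Lemma det_row0 n (A : 'M[R]_n) i0 : (forall j, A i0 j = 0) -> \det A = 0.
Proof.
move=> row0; rewrite (@determinant_multilinear _ _ A A A i0 0 0) ?mul0r ?addr0 //.
by apply/matrixP=> i j; rewrite !mxE row0 !mul0r addr0.
Qed.

Definition clear_row0 k (A : 'M[R]_(1 + k)) : 'M[R]_(1 + k) :=
  \matrix_(i, j) if i == 0 then 0 else A i j.

Definition negunit_row0 k (A : 'M[R]_(1 + k)) : 'M[R]_(1 + k) :=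
  \matrix_(i, j) if i == 0 then - (j == 0)%:R else A i j.

Lemma det_negunit_row0 k (A : 'M[R]_(1 + k)) :
  \det (negunit_row0 A) = - \det (drsubmx A).
Proof.
have -> : negunit_row0 A = block_mx (-1) 0 (dlsubmx A) (drsubmx A).
  apply/matrixP; block_entries; by rewrite !ord1.
by rewrite det_lblock det_mx11 !mxE mulNr mul1r.
Qed.

Variables (m n : nat) (P : 'M[R]_(1 + m)) (Q : 'M[R]_(1 + n)).

(* Schwenk's formula, expanding along the rows of the two joined roots. *)
Lemma det_block_join :
  \det (block_mx P (- delta_mx 0 0) (- delta_mx 0 0) Q) =
  \det P * \det Q - \det (drsubmx P) * \det (drsubmx Q).
Proof.
set E := (delta_mx 0 0 : 'M[R]_(1 + m, 1 + n)).
set E' := (delta_mx 0 0 : 'M[R]_(1 + n, 1 + m)).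
pose i0 : 'I_((1 + m) + (1 + n)) := lshift _ 0.
pose i1 : 'I_((1 + m) + (1 + n)) := rshift _ 0.
have ne01 : i0 != i1 by rewrite /i0 /i1 eq_lrshift.
have split_row0 : \det (block_mx P (- E) (- E') Q) =
    \det P * \det Q + \det (block_mx (clear_row0 P) (- E) (- E') Q).
  rewrite (@det_rowD _ _ (block_mx P 0 (- E') Q)
    (block_mx (clear_row0 P) (- E) (- E') Q) i0) ?det_lblock //.
  - move=> j; rewrite -(splitK j); case: (split j) => b /=;
    by rewrite ?block_mxEul ?block_mxEur ?mxE eqxx ?addr0 ?add0r.
  - by rewrite /i0; block_entries.
  - by rewrite /i0; block_entries.
have split_row1 : \det (block_mx (clear_row0 P) (- E) (- E') Q) =
    \det (block_mx (clear_row0 P) (- E) (- E') (clear_row0 Q)).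
  rewrite (@det_rowD _ _ (block_mx (clear_row0 P) (- E) (- E') (clear_row0 Q))
    (block_mx (clear_row0 P) (- E) 0 Q) i1).
  - by rewrite det_ublock (@det_row0 _ (clear_row0 P) 0) ?mul0r ?addr0 // => j; rewrite mxE.
  - move=> j; rewrite -(splitK j); case: (split j) => b /=;
    by rewrite ?block_mxEdl ?block_mxEdr ?mxE ?eqxx ?addr0 ?add0r.
  - by rewrite /i1; block_entries.
  - by rewrite /i1; block_entries.
have swap_rows : block_mx (clear_row0 P) (- E) (- E') (clear_row0 Q) =
    xrow i0 i1 (block_mx (negunit_row0 P) 0 0 (negunit_row0 Q)).
  apply/matrixP=> i j; rewrite [RHS]mxE.
  case: tpermP => [->|->|]; last first.
    by move=> /eqP + /eqP; move: i j; rewrite /i0 /i1; block_entries.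
  1,2: rewrite /i0 /i1 -(splitK j); case: (split j) => b /=.
  1-4: by rewrite ?block_mxEul ?block_mxEur ?block_mxEdl ?block_mxEdr ?mxE ?eqxx.
rewrite split_row0 split_row1 swap_rows xrowE det_mulmx det_perm odd_tperm ne01.
by rewrite det_ublock !det_negunit_row0 expr1 mulrNN mulN1r.
Qed.
End DetJoin.

(* The inner fixpoint of [adj], named so that it can be reasoned about. *)
Fixpoint adj_children (i j : nat) (ts : seq tree) (o : nat) : bool :=
  match ts with
  | [::] => false
  | c :: ts' =>
    [|| (i == 0)%N && (j == o), (j == 0)%N && (i == o),
        [&& (o <= i)%N, (o <= j)%N, (i < o + tree_size c)%N,
            (j < o + tree_size c)%N & adj c (i - o)%N (j - o)%N]
      | adj_children i j ts' (o + tree_size c)%N]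
  end.

Lemma adj_NodeE ts i j : adj (Node ts) i j = adj_children i j ts 1.
Proof. by rewrite /=; elim: ts 1%N => //= c ts IH o; rewrite IH. Qed.

Definition adj_child (c : tree) (i j o : nat) : bool :=
  [|| (i == 0)%N && (j == o), (j == 0)%N && (i == o) |
      [&& (o <= i)%N, (o <= j)%N, (i < o + tree_size c)%N,
          (j < o + tree_size c)%N & adj c (i - o)%N (j - o)%N]].

Lemma adj_children_rcons i j ts c o :
  adj_children i j (rcons ts c) o =
  adj_children i j ts o || adj_child c i j (o + sumn (map tree_size ts)).
Proof.
elim: ts o => [|c' ts IH] o /=; first by rewrite addn0 orbF /adj_child orbA.
by rewrite IH addnA !orbA.
Qed.

Lemma tree_size_gt0 t : (0 < tree_size t)%N.
Proof. by case: t. Qed.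

Lemma adj_children_bound i j ts o : (0 < o)%N -> adj_children i j ts o ->
  (i < o + sumn (map tree_size ts))%N && (j < o + sumn (map tree_size ts))%N.
Proof.
elim: ts o => [|c ts IH] o //= o_gt0; have c_gt0 := tree_size_gt0 c.
case/or4P=> [/andP[/eqP-> /eqP->]|/andP[/eqP-> /eqP->]|/and5P[_ _ ? ? _]|]; try lia.
by move/(IH _ (ltn_addr _ o_gt0)); rewrite !addnA.
Qed.

Lemma tree_size_rcons ts c :
  tree_size (Node (rcons ts c)) = (tree_size (Node ts) + tree_size c)%N.
Proof. by rewrite /= map_rcons -cats1 sumn_cat /= addn0 addSn. Qed.

Lemma adj_rcons ts c i j :
  adj (Node (rcons ts c)) i j = adj (Node ts) i j || adj_child c i j (tree_size (Node ts)).
Proof. by rewrite !adj_NodeE adj_children_rcons add1n. Qed.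

Lemma adj_bound t i j : adj t i j -> (i < tree_size t)%N && (j < tree_size t)%N.
Proof.
by case: t => ts; rewrite adj_NodeE => /adj_children_bound; rewrite add1n; apply.
Qed.

Lemma adj_out t i j : (tree_size t <= i)%N || (tree_size t <= j)%N -> adj t i j = false.
Proof. by move=> out; apply/negP => /adj_bound; lia. Qed.

Definition char_entry (t : tree) (i j : nat) : {poly int} :=
  'X *+ (i == j)%N - ((adj t i j)%:R : int)%:P.

Lemma addn_eq_l m n : (m + n == m)%N = (n == 0)%N.
Proof. by rewrite -[X in _ == X]addn0 eqn_add2l. Qed.

Section CharEntryRcons.
Variables (ts : seq tree) (c : tree).
Let s := tree_size (Node ts).

Lemma char_entry_rcons_ll i j : (i < s)%N -> (j < s)%N ->
  char_entry (Node (rcons ts c)) i j = char_entry (Node ts) i j.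
Proof.
move=> i_s j_s; rewrite /char_entry adj_rcons /adj_child -/s.
by rewrite (ltn_eqF i_s) (ltn_eqF j_s) [(s <= i)%N]leqNgt i_s !andbF /= orbF.
Qed.

Lemma char_entry_rcons_lr i j : (i < s)%N ->
  char_entry (Node (rcons ts c)) i (s + j) = - ((i == 0)%N && (j == 0)%N)%:R.
Proof.
move=> i_s; rewrite /char_entry adj_rcons adj_out ?leq_addr ?orbT // /adj_child -/s.
rewrite (ltn_eqF i_s) (ltn_eqF (leq_trans i_s (leq_addr j s))) addn_eq_l.
by rewrite [(s <= i)%N]leqNgt i_s andbF /= !orbF mulr0n sub0r polyC_natr.
Qed.

Lemma char_entry_rcons_rl i j : (j < s)%N ->
  char_entry (Node (rcons ts c)) (s + i) j = - ((i == 0)%N && (j == 0)%N)%:R.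
Proof.
move=> j_s; rewrite /char_entry adj_rcons adj_out ?leq_addr // /adj_child -/s.
rewrite (ltn_eqF j_s) (gtn_eqF (leq_trans j_s (leq_addr i s))) addn_eq_l.
by rewrite [(s <= j)%N]leqNgt j_s /= !andbF /= orbF andbC mulr0n sub0r polyC_natr.
Qed.

Lemma char_entry_rcons_rr i j : (i < tree_size c)%N -> (j < tree_size c)%N ->
  char_entry (Node (rcons ts c)) (s + i) (s + j) = char_entry c i j.
Proof.
move=> i_c j_c; rewrite /char_entry adj_rcons adj_out ?leq_addr // /adj_child -/s.
have s_gt0 : (0 < s)%N := tree_size_gt0 _.
rewrite !addn_eq0 !(gtn_eqF s_gt0) !addn_eq_l !leq_addr !ltn_add2l i_c j_c.
by rewrite !addKn eqn_add2l.
Qed.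

End CharEntryRcons.

Definition nat_mx N (f : nat -> nat -> {poly int}) : 'M[{poly int}]_N :=
  \matrix_(i, j) f i j.

Lemma phiE t : phi t = \det (nat_mx (tree_size t) (char_entry t)).
Proof. by congr (\det _); apply/matrixP => i j; rewrite !mxE. Qed.

(* phi(t - v) for the root v, which is vertex 0. *)
Definition phi_noroot (t : tree) : {poly int} :=
  \det (nat_mx (tree_size t).-1 (fun i j => char_entry t i.+1 j.+1)).

Lemma nat_mx_drsub k f : drsubmx (nat_mx (1 + k) f) = nat_mx k (fun i j => f i.+1 j.+1).
Proof. by apply/matrixP => i j; rewrite !mxE. Qed.

Lemma phi_rcons ts c :
  phi (Node (rcons ts c)) = phi (Node ts) * phi c - phi_noroot (Node ts) * phi_noroot c.
Proof.
case: c => us; rewrite !phiE /phi_noroot tree_size_rcons.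
set m := sumn (map tree_size ts); set n := sumn (map tree_size us).
have -> : nat_mx (tree_size (Node ts) + tree_size (Node us))
    (char_entry (Node (rcons ts (Node us))))
  = block_mx (nat_mx (1 + m) (char_entry (Node ts))) (- delta_mx 0 0) (- delta_mx 0 0)
             (nat_mx (1 + n) (char_entry (Node us))).
  apply/matrixP; block_entries.
  - by rewrite char_entry_rcons_ll.
  - by rewrite char_entry_rcons_lr.
  - by rewrite char_entry_rcons_rl.
  - by rewrite char_entry_rcons_rr.
by rewrite det_block_join !nat_mx_drsub.
Qed.

Lemma phi_noroot_rcons ts c :
  phi_noroot (Node (rcons ts c)) = phi_noroot (Node ts) * phi c.
Proof.
case: c => us; rewrite /phi_noroot phiE tree_size_rcons.
set m := sumn (map tree_size ts); set n := sumn (map tree_size us).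
have -> : nat_mx (tree_size (Node ts) + tree_size (Node us)).-1
    (fun i j => char_entry (Node (rcons ts (Node us))) i.+1 j.+1)
  = block_mx (nat_mx m (fun i j => char_entry (Node ts) i.+1 j.+1)) 0 0
             (nat_mx (1 + n) (char_entry (Node us))).
  apply/matrixP; block_entries.
  - by rewrite (@char_entry_rcons_ll ts (Node us) i.+1 j.+1 (ltn_ord i) (ltn_ord j)).
  - by rewrite (@char_entry_rcons_lr ts (Node us) i.+1 j (ltn_ord i)) /= ?mulr0n oppr0.
  - by rewrite (@char_entry_rcons_rl ts (Node us) i j.+1 (ltn_ord j)) andbF oppr0.
  - by rewrite (char_entry_rcons_rr _ (ltn_ord i) (ltn_ord j)).
by rewrite det_ublock.
Qed.

Lemma tjoinS t1 k t2 : exists ts,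
  tjoin t1 k t2 = Node ts /\ tjoin t1 k.+1 t2 = Node (rcons ts t2).
Proof.
case: t1 => ts; exists (ts ++ nseq k t2); split => //.
by rewrite /tjoin -cats1 -catA -addn1 nseqD.
Qed.

Lemma tjoin0 t1 t2 : tjoin t1 0 t2 = t1.
Proof. by case: t1 => ts; rewrite /= cats0. Qed.

Lemma phi_noroot_tjoin t1 k t2 : phi_noroot (tjoin t1 k t2) = phi_noroot t1 * phi t2 ^+ k.
Proof.
elim: k => [|k IH]; first by rewrite tjoin0 mulr1.
have [ts [Ek ->]] := tjoinS t1 k t2.
by rewrite phi_noroot_rcons -Ek IH exprSr mulrA.
Qed.

Lemma phi_tjoin t1 k t2 : phi (tjoin t1 k t2) =
  phi t1 * phi t2 ^+ k - k%:R * phi_noroot t1 * phi_noroot t2 * phi t2 ^+ k.-1.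
Proof.
elim: k => [|k IH]; first by rewrite tjoin0 mulr1 !mul0r subr0.
have [ts [Ek ->]] := tjoinS t1 k t2.
rewrite phi_rcons -Ek IH phi_noroot_tjoin.
by case: k {IH Ek} => [|k]; rewrite /= ?exprS; ring.
Qed.

Lemma phi_leaf : phi leaf = 'X.
Proof. by rewrite phiE det_mx11 mxE /char_entry subr0. Qed.

Lemma phi_noroot_leaf : phi_noroot leaf = 1.
Proof. exact: det_mx00. Qed.

Definition quad (b : nat) : {poly int} := 'X^2 - (b%:R : int)%:P.

Lemma quadE b : quad b = 'X^2 - b%:R.
Proof. by rewrite /quad polyC_natr. Qed.

Lemma quad_neq0 b : quad b != 0.
Proof. exact/monic_neq0/monicXnsubC. Qed.

Lemma phi_Crev_recurrence a b t : (b < a)%N ->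
  phi (Crev (b :: t)) * phi (Crev t) =
    phi_noroot (Crev (b :: t)) * phi_noroot (Crev t) * quad b ->
  phi (Crev [:: a, b & t]) * quad b = phi (Crev (b :: t)) ^+ (a - b) * phi (Crev t) * quad a.
Proof.
move=> lt_ba; set A := phi (Crev (b :: t)); set A' := phi (Crev t).
set B := phi_noroot (Crev (b :: t)); set B' := phi_noroot (Crev t) => consecutive.
have [k ->] : exists k, a = (b + k.+1)%N by exists (a - b).-1; lia.
rewrite [Crev _]/= phi_tjoin -/A -/A' -/B -/B' addKn.
rewrite !quadE in consecutive *.
have -> : (A' * A ^+ k.+1 - k.+1%:R * B' * B * A ^+ k) * ('X^2 - b%:R) =
    A ^+ k * (A * A' * ('X^2 - b%:R) - k.+1%:R * (B * B' * ('X^2 - b%:R))).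
  by rewrite (exprS A); ring.
by rewrite -consecutive (exprS A) natrD; ring.
Qed.

Lemma phi_Crev_consecutive b t : sorted gtn (b :: t) ->
  phi (Crev (b :: t)) * phi (Crev t) =
    phi_noroot (Crev (b :: t)) * phi_noroot (Crev t) * quad b.
Proof.
elim: t b => [|c t IH] b.
  move=> _; change (Crev [:: b]) with (tjoin leaf b leaf).
  rewrite phi_tjoin phi_noroot_tjoin phi_leaf phi_noroot_leaf quadE.
  by case: b => [|b]; rewrite /= ?(exprS 'X); ring.
move=> /andP[lt_cb sorted_ct]; have consecutive := IH c sorted_ct.
have rec := phi_Crev_recurrence lt_cb consecutive.
have -> : phi_noroot (Crev [:: b, c & t]) =
    phi_noroot (Crev t) * phi (Crev (c :: t)) ^+ (b - c) := phi_noroot_tjoin _ _ _.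
apply: (mulIf (quad_neq0 c)); rewrite mulrAC rec.
transitivity (phi (Crev (c :: t)) ^+ (b - c) * quad b * (phi (Crev (c :: t)) * phi (Crev t))).
  by ring.
by rewrite consecutive; ring.
Qed.

Theorem lemma2 (n : nat) (r : seq nat) :
  (2 <= n)%N -> size r = n -> all (fun k => 0 < k)%N r -> sorted ltn r ->
  phi (C r) * ('X^2 - ((nth 0 r (n - 2))%:R)%:P) =
  phi (C (take n.-1 r)) ^+ (nth 0 r n.-1 - nth 0 r (n - 2))
    * phi (C (take (n - 2) r)) * ('X^2 - ((nth 0 r n.-1)%:R)%:P).
Proof.
move=> n_ge2 size_r _; subst n.
case/lastP: r n_ge2 => [|r a] //; case/lastP: r => [|s b] // _.
rewrite -rev_sorted /C !rev_rcons => /andP[lt_ba sorted_bs].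
have take_b : take (size s).+1 (rcons (rcons s b) a) = rcons s b.
  by rewrite -cats1 take_size_cat ?size_rcons.
have take_s : take (size s) (rcons (rcons s b) a) = s.
  by rewrite -!cats1 -catA take_size_cat.
rewrite !size_rcons /= subn2 /= take_b take_s rev_rcons.
rewrite !nth_rcons size_rcons ltnn eqxx ltnSn ltnn eqxx.
exact: phi_Crev_recurrence lt_ba (phi_Crev_consecutive sorted_bs).
Qed.
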